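(* Let $Q=(\mathcal S,|\cdot|,q)$ be a quasi-reversible queueing system satisfying Assumption 1 with finite $\mathcal S$, let $\Pi$ be a stationary measure of $Q$, and let $r:\mathcal S\to\mathbb R$, $R:\mathcal S\times\mathcal S\to\mathbb R$ be reward functions. For an admission policy $\gamma$ let $G_\gamma=\sum_{s}\Pi_\gamma(s)r(s)+\sum_{s,t}\Pi_\gamma(s)q_\gamma(s,t)R(s,t)$, where $\Pi_\gamma$ is the unique stationary distribution of $q_\gamma$. Then there exists a Ferrers set $\mathcal A\subseteq|\mathcal S|$ such that the deterministic policy $\gamma^{\mathcal A}_i(s)=\mathbf 1\{|s|+e_i\in\mathcal A\}$ (which is balanced, with balance function $\mathbf 1_{\mathcal A}$) satisfies $G_{\gamma^{\mathcal A}}\ge G_\gamma$ for every balanced admission policy $\gamma$. Equivalently, the function $\Gamma_{\mathcal A}(x)=\frac1Z\mathbf 1\{x\in\mathcal A\}$, $Z=\sum_{s:|s|\in\mathcal A}\Pi(s)$, is an optimal solution of the linear program: maximize over $\Gamma:|\mathcal S|\to\mathbb R$ $$\sum_{s\in\mathcal S}\Pi(s)\Gamma(|s|)r(s)+\sum_{s\in\mathcal S}\sum_{i=1}^n\sum_{t\in\mathcal S_{|s|+e_i}}\Pi(s)\Gamma(|s|+e_i)q(s,t)R(s,t)+\sum_{s\in\mathcal S}\sum_{t\notin\bigcup_i\mathcal S_{|s|+e_i}}\Pi(s)\Gamma(|s|)q(s,t)R(s,t)$$ subject to $\Gamma(x)\ge0$ for all $x$, $\Gamma(x)\ge\Gamma(x+e_i)$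 whenever $x,x+e_i\in|\mathcal S|$, and $\sum_{s\in\mathcal S}\Pi(s)\Gamma(|s|)=1$.
   Context: $e_i$ is the $i$-th unit vector; $\le$ componentwise; a Ferrers set $\mathcal X\subseteq\mathbb N^n$ contains $0$ and every $y\in\mathbb N^n$ with $y\le x$ for some $x\in\mathcal X$. Queueing system $Q=(\mathcal S,|\cdot|,q)$: $\mathcal S$ countable, $|\cdot|:\mathcal S\to\mathbb N^n$, $|\mathcal S|$ Ferrers, unique $\varnothing$ with $|\varnothing|=0$, $q$ a CTMC rate kernel with $q(s,t)=0$ unless $t\in\mathcal S_{|s|}\cup\bigcup_i(\mathcal S_{|s|+e_i}\cup\mathcal S_{|s|-e_i})$, $\mathcal S_x=\{s:|s|=x\}$. Assumption 1: there is $\mathcal S_{\mathrm{rec}}$ with (1) every $s\in\mathcal S_{\mathrm{rec}}$ reachable from $\varnothing$ by a positive-rate path along which $|\cdot|$ is non-decreasing; (2) no $s\notin\mathcal S_{\mathrm{rec}}$ reachable from $\varnothing$; (3) from every $s$ a positive-rate path to $\varnothing$ along which $|\cdot|$ is non-increasing; (4) $|\mathcal S_{\mathrm{rec}}|$ Ferrers. Quasi-reversibility: stationary measures satisfy $\Pi(s)\sum_{t\in\mathcal S_{|s|+e_i}}q(s,t)=\sum_{t\in\mathcal S_{|s|+e_i}}\Pi(t)q(t,s)$ for all $s,i$. An admission policy is $\gamma:\mathcal S\to[0,1]^n$; $q_\gamma(s,t)=q(s,t)\gamma_i(s)$ if $t\in\mathcal S_{|s|+e_i}$, $q_\gamma(s,t)=q(s,t)$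 otherwise. A policy is balanced if it is microstate-independent ($\gamma(s)=\gamma(t)$ whenever $|s|=|t|$, so it is viewed as a function of $x=|s|$) and there exists $\Gamma:|\mathcal S|\to\mathbb R_{\ge0}$ with $\Gamma(0)=1$ and $\Gamma(x)\gamma_i(x)=\Gamma(x+e_i)$ whenever $x,x+e_i\in|\mathcal S|$. *)

From HB Require Import structures.
From mathcomp Require Import all_boot all_order all_algebra.
From mathcomp Require Import reals.
Set Implicit Arguments. Unset Strict Implicit. Unset Printing Implicit Defensive.
Import Order.TTheory GRing.Theory Num.Theory.
Local Open Scope ring_scope.

Definition vec (n : nat) := {ffun 'I_n -> nat}.
Definition vzero n : vec n := [ffun _ => 0%N].
Definition unitv n (i : 'I_n) : vec n := [ffun j => nat_of_bool (j == i)].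
Definition vadd n (x y : vec n) : vec n := [ffun j => (x j + y j)%N].
Definition vle n (x y : vec n) : bool := [forall j, (x j <= y j)%N].

Definition ferrers n (X : vec n -> Prop) : Prop :=
  X (vzero n) /\ forall x y : vec n, X x -> vle y x -> X y.

Section Queue.
Variables (R : realType) (n : nat) (S : finType) (sz : S -> vec n).

Definition img_sz (x : vec n) : Prop := exists s, sz s = x.

Definition queueing_system (emp : S) (q : S -> S -> R) : Prop :=
  ferrers img_sz /\
  sz emp = vzero n /\ (forall s, sz s = vzero n -> s = emp) /\
  (forall s t, 0 <= q s t) /\
  (forall s t, q s t != 0 ->
     sz t = sz s \/ exists i, sz t = vadd (sz s) (unitv i)
                           \/ sz s = vadd (sz t) (unitv i)).

Definition step_pos (q : S -> S -> R) : rel S := fun a b => 0 < q a b.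
Definition step_up (q : S -> S -> R) : rel S :=
  fun a b => (0 < q a b) && vle (sz a) (sz b).
Definition step_down (q : S -> S -> R) : rel S :=
  fun a b => (0 < q a b) && vle (sz b) (sz a).

Definition reach (e : rel S) (s t : S) : Prop :=
  exists p : seq S, path e s p /\ last s p = t.

Definition assumption1 (emp : S) (q : S -> S -> R) : Prop :=
  exists Srec : S -> Prop,
    (forall s, Srec s -> reach (step_up q) emp s) /\
    (forall s, ~ Srec s -> ~ reach (step_pos q) emp s) /\
    (forall s, reach (step_down q) s emp) /\
    ferrers (fun x => exists s, Srec s /\ sz s = x).

Definition stationary (k : S -> S -> R) (P : S -> R) : Prop :=
  (forall s, 0 <= P s) /\
  forall t, P t * (\sum_u k t u) = \sum_s P s * k s t.

Definition stationary_measure (k : S -> S -> R) (P : S -> R) : Prop :=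
  stationary k P /\ exists s, P s != 0.

Definition stationary_distribution (k : S -> S -> R) (P : S -> R) : Prop :=
  stationary k P /\ \sum_s P s = 1.

Definition quasi_reversible (q : S -> S -> R) : Prop :=
  forall P, stationary_measure q P ->
  forall s (i : 'I_n),
    P s * (\sum_(t | sz t == vadd (sz s) (unitv i)) q s t)
    = \sum_(t | sz t == vadd (sz s) (unitv i)) P t * q t s.

Definition admission_policy (g : S -> 'I_n -> R) : Prop :=
  forall s i, 0 <= g s i <= 1.

Definition qpol (q : S -> S -> R) (g : S -> 'I_n -> R) (s t : S) : R :=
  q s t * (if [pick i | sz t == vadd (sz s) (unitv i)] is Some i
           then g s i else 1).

Definition balanced (g : S -> 'I_n -> R) : Prop :=
  (forall s t, sz s = sz t -> forall i, g s i = g t i) /\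
  exists Gam : vec n -> R,
    Gam (vzero n) = 1 /\
    (forall x, img_sz x -> 0 <= Gam x) /\
    (forall s i, img_sz (vadd (sz s) (unitv i)) ->
        Gam (sz s) * g s i = Gam (vadd (sz s) (unitv i))).

Definition det_policy (A : pred (vec n)) (s : S) (i : 'I_n) : R :=
  if A (vadd (sz s) (unitv i)) then 1 else 0.

Definition Greward (r : S -> R) (Rw : S -> S -> R) (k : S -> S -> R)
  (P : S -> R) : R :=
  \sum_s P s * r s + \sum_s \sum_t P s * k s t * Rw s t.

Definition is_arrival (s t : S) : bool :=
  [exists i : 'I_n, sz t == vadd (sz s) (unitv i)].

Definition lp_objective (q : S -> S -> R) (Pi : S -> R) (r : S -> R)
  (Rw : S -> S -> R) (Gam : vec n -> R) : R :=
  \sum_s Pi s * Gam (sz s) * r s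
  + \sum_s \sum_(i < n) \sum_(t | sz t == vadd (sz s) (unitv i))
        Pi s * Gam (vadd (sz s) (unitv i)) * q s t * Rw s t
  + \sum_s \sum_(t | ~~ is_arrival s t) Pi s * Gam (sz s) * q s t * Rw s t.

Definition lp_feasible (Pi : S -> R) (Gam : vec n -> R) : Prop :=
  (forall x, img_sz x -> 0 <= Gam x) /\
  (forall x (i : 'I_n), img_sz x -> img_sz (vadd x (unitv i)) ->
      Gam (vadd x (unitv i)) <= Gam x) /\
  \sum_s Pi s * Gam (sz s) = 1.

Definition lp_optimal q Pi r Rw (Gam : vec n -> R) : Prop :=
  lp_feasible Pi Gam /\
  forall Gam', lp_feasible Pi Gam' ->
    lp_objective q Pi r Rw Gam' <= lp_objective q Pi r Rw Gam.

Definition GammaA (Pi : S -> R) (A : pred (vec n)) (x : vec n) : R :=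
  (if A x then 1 else 0) / (\sum_(s | A (sz s)) Pi s).

End Queue.

From HB Require Import structures.
From mathcomp Require Import all_boot all_order all_algebra.
From mathcomp Require Import reals ring boolp.
Import Order.TTheory GRing.Theory Num.Theory.
Local Open Scope ring_scope.
Set Implicit Arguments. Unset Strict Implicit. Unset Printing Implicit Defensive.

(* By quasi-reversibility, a policy balanced by [Gamma] has the product-form stationary
   distribution [Pi(s) Gamma(|s|) / Z], which is the only one because every state drains
   to the empty state; its long-run reward is therefore the LP objective at [Gamma / Z].
   Both the objective and the normalising mass are linear in [Gamma], and every feasible
   [Gamma] (nonnegative, non-increasing on [|S|]) is a nonnegative combination of
   indicators of Ferrers sets, namely of its successive positive supports. So the ratio
   objective/mass is maximised by the indicator of a Ferrers set [A], and [gamma^A],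
   whose balance function is [1_A], beats every balanced policy. *)

Lemma reach_connect (T : finType) (e : rel T) s t : reach e s t <-> connect e s t.
Proof.
split=> [[p [e_p <-]]|/connectP[p e_p ->]]; last by exists p.
by apply/connectP; exists p.
Qed.

Lemma path_last_inv (T : Type) (e : rel T) (I : pred T) :
  (forall a b, I a -> e a b -> I b) -> forall s p, I s -> path e s p -> I (last s p).
Proof.
move=> Ie s p; elim: p s => [|b p IH] s //= Is /andP[e_sb e_p].
exact: IH (Ie _ _ Is e_sb) e_p.
Qed.

Section StationaryUniqueness.
Variables (R : realType) (S : finType) (k : S -> S -> R) (root : S).
Hypothesis k_ge0 : forall s t, 0 <= k s t.

Local Notation epos := (step_pos k).

Lemma stationary_step_gt0 (P : S -> R) s t :
  stationary k P -> 0 < P s -> 0 < k s t -> 0 < P t.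
Proof.
move=> [P_ge0 bal] Ps kst; rewrite lt0r P_ge0 andbT; apply: contraTneq Ps => Pt0.
have inflow0 : \sum_u P u * k u t = 0 by rewrite -bal Pt0 mul0r.
have := psumr_eq0P (fun u _ => mulr_ge0 (P_ge0 u) (k_ge0 u t)) inflow0 (i := s) isT.
move/eqP; rewrite mulf_eq0 => /orP[] /eqP E; first by rewrite E ltxx.
by rewrite E ltxx in kst.
Qed.

Lemma stationary_connect_gt0 (P : S -> R) s t :
  stationary k P -> 0 < P s -> connect epos s t -> 0 < P t.
Proof.
move=> stP Ps /connectP[p e_p ->].
exact: path_last_inv (fun a b Pa => stationary_step_gt0 stP Pa) _ _ Ps e_p.
Qed.

Lemma stationary_no_inflow (A : pred S) (P : S -> R) :
  (forall t u, A t -> 0 < k t u -> A u) -> stationary k P ->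
  forall s t, ~~ A s -> A t -> P s * k s t = 0.
Proof.
move=> A_closed [P_ge0 bal] s t As At.
have Pk_ge0 u v : 0 <= P u * k u v by exact: mulr_ge0.
have outflow u : A u -> P u * (\sum_v k u v) = \sum_(v | A v) P u * k u v.
  move=> Au; rewrite mulr_sumr (bigID A) /= [X in _ + X]big1 ?addr0 // => v Av.
  suff -> : k u v = 0 by rewrite mulr0.
  apply/eqP; rewrite eq_le k_ge0 andbT leNgt.
  by apply/negP => kuv; move: (A_closed _ _ Au kuv); rewrite (negbTE Av).
have balA : \sum_(v | A v) \sum_(u | A u) P u * k u v
    + \sum_(v | A v) \sum_(u | ~~ A u) P u * k u v
    = \sum_(v | A v) \sum_(u | A u) P u * k u v.
  rewrite -big_split [RHS]exchange_big /=; apply: eq_bigr => v Av.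
  by rewrite -outflow // bal [RHS](bigID A).
have inflow0 : \sum_(v | A v) \sum_(u | ~~ A u) P u * k u v = 0.
  by apply: (addrI (\sum_(v | A v) \sum_(u | A u) P u * k u v)); rewrite addr0.
have := psumr_eq0P (fun v _ => sumr_ge0 _ (fun u _ => Pk_ge0 u v)) inflow0 (i := t) At.
by move/(psumr_eq0P (fun u _ => Pk_ge0 u t)); apply.
Qed.

Hypothesis root_reachable : forall s, connect epos s root.

Lemma stationary_eq0_off_class (P : S -> R) s :
  stationary k P -> ~~ connect epos root s -> P s = 0.
Proof.
move=> stP nCs; apply/eqP; rewrite eq_le stP.1 andbT leNgt; apply/negP => Ps.
have C_closed t u : connect epos root t -> 0 < k t u -> connect epos root u.
  by move=> Ct ktu; apply: connect_trans Ct (connect1 _).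
pose I a := (0 < P a) && ~~ connect epos root a.
have I_step a b : I a -> epos a b -> I b.
  move=> /andP[Pa nCa] kab; rewrite /I (stationary_step_gt0 stP Pa kab) /=.
  apply/negP => Cb; have := stationary_no_inflow C_closed stP nCa Cb.
  by apply/eqP; rewrite mulf_neq0 // lt0r_neq0.
have /connectP[p e_p E] := root_reachable s.
have : I (last s p) by apply: path_last_inv I_step _ _ _ e_p; rewrite /I Ps nCs.
by rewrite -E /I connect0 andbF.
Qed.

Lemma stationary_distribution_gt0 (P : S -> R) s :
  stationary_distribution k P -> connect epos root s -> 0 < P s.
Proof.
move=> [stP sum1] Cs; case: (pickP (fun s => 0 < P s)) => [s1 Ps1|Pnpos].
  exact: stationary_connect_gt0 stP Ps1 (connect_trans (root_reachable s1) Cs).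
have : \sum_s P s = 0.
  by apply: big1 => u _; apply/eqP; rewrite eq_le stP.1 andbT leNgt Pnpos.
by rewrite sum1 => /eqP; rewrite oner_eq0.
Qed.

Lemma stationary_subr (P1 P2 : S -> R) (a : R) :
  stationary k P1 -> stationary k P2 -> (forall s, a * P1 s <= P2 s) ->
  stationary k (fun s => P2 s - a * P1 s).
Proof.
move=> [_ bal1] [_ bal2] le_aP; split=> [s|t]; first by rewrite subr_ge0.
rewrite mulrBl bal2 -mulrA bal1 mulr_sumr -sumrB.
by apply: eq_bigr => u _; rewrite mulrBl mulrA.
Qed.

(* With [lam] the least ratio [P2 / P1] on the class of [root], [P2 - lam P1] is a
   stationary measure vanishing somewhere on that class, hence everywhere. *)
Lemma stationary_distribution_unique (P1 P2 : S -> R) :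
  stationary_distribution k P1 -> stationary_distribution k P2 -> P2 =1 P1.
Proof.
move=> d1 d2; pose C := connect epos root.
have [s0 Cs0 ratio_min] := arg_minP (fun s => P2 s / P1 s) (connect0 epos root).
pose lam := P2 s0 / P1 s0.
have P1s0 : 0 < P1 s0 := stationary_distribution_gt0 d1 Cs0.
have le_lamP s : lam * P1 s <= P2 s.
  have [Cs|nCs] := boolP (C s).
    by rewrite -ler_pdivlMr ?(stationary_distribution_gt0 d1 Cs) // ratio_min.
  by rewrite !(stationary_eq0_off_class _ nCs) ?mulr0 //; [exact: d2.1|exact: d1.1].
have stD := stationary_subr d1.1 d2.1 le_lamP.
have D0 s : P2 s - lam * P1 s = 0.
  apply/eqP; rewrite eq_le subr_ge0 le_lamP andbT leNgt; apply/negP => Ds.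
  have := stationary_connect_gt0 stD Ds (connect_trans (root_reachable s) Cs0).
  by rewrite /lam mulfVK ?lt0r_neq0 // subrr ltxx.
have lam1 : lam = 1.
  have : \sum_s P2 s = lam * \sum_s P1 s.
    by rewrite mulr_sumr; apply: eq_bigr => s _; apply/eqP; rewrite -subr_eq0 D0.
  by rewrite d1.2 d2.2 mulr1.
by move=> s; apply/eqP; rewrite -subr_eq0 -[P1 s]mul1r -lam1 D0.
Qed.
End StationaryUniqueness.

Section Vectors.
Variable n : nat.
Implicit Types x y : vec n.

Lemma vle0x x : vle (vzero n) x.
Proof. by apply/forallP => j; rewrite ffunE. Qed.

Lemma vle_vadd x i : vle x (vadd x (unitv i)).
Proof. by apply/forallP => j; rewrite !ffunE leq_addr. Qed.

Lemma vadd_unitv_nle x i : ~~ vle (vadd x (unitv i)) x.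
Proof. by apply/negP => /forallP /(_ i); rewrite !ffunE eqxx addn1 ltnn. Qed.

Lemma vle0 y : vle y (vzero n) -> y = vzero n.
Proof.
move=> /forallP le_y0; apply/ffunP => j; apply/eqP.
by have := le_y0 j; rewrite !ffunE leqn0.
Qed.

Lemma vadd_unitv_inj x i j : vadd x (unitv i) = vadd x (unitv j) -> i = j.
Proof.
move=> /(congr1 (fun y : vec n => y i)); rewrite !ffunE eqxx => /eqP.
by rewrite eqn_add2l; case: (i == j) /eqP.
Qed.

Lemma sum_vadd_unitv x j : (\sum_k vadd x (unitv j) k = (\sum_k x k).+1)%N.
Proof.
rewrite (eq_bigr (fun k => x k + (k == j))%N) => [|k _]; last by rewrite !ffunE.
rewrite big_split /= -addn1; congr (_ + _).
by rewrite (bigD1 j) //= eqxx big1 // => k /negbTE ->.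
Qed.

Lemma vle_vadd_lt x y j : vle y x -> (y j < x j)%N -> vle (vadd y (unitv j)) x.
Proof.
move=> /forallP le_yx lt_j; apply/forallP => k; rewrite !ffunE.
by case: (eqVneq k j) => [->|_]; rewrite ?addn1 ?addn0.
Qed.

Lemma vle_neq_lt x y : vle y x -> x != y -> exists j, (y j < x j)%N.
Proof.
move=> /forallP le_yx neq_xy; case: (pickP (fun j => y j < x j)%N) => [j|no_lt].
  by exists j.
case/eqP: neq_xy; apply/ffunP => j; apply/eqP.
by rewrite eqn_leq le_yx leqNgt no_lt.
Qed.

Lemma ferrers_antitone (R : realType) (X : vec n -> Prop) (G : vec n -> R) :
  ferrers X ->
  (forall x i, X x -> X (vadd x (unitv i)) -> G (vadd x (unitv i)) <= G x) ->
  forall x y, X x -> vle y x -> G x <= G y.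
Proof.
move=> [_ X_down] G_step x y Xx.
have step_up y' : vle y' x -> x != y' -> exists2 j, vle (vadd y' (unitv j)) x &
    (\sum_k vadd y' (unitv j) k <= \sum_k x k)%N.
  move=> le_y'x /(vle_neq_lt le_y'x)[j lt_j]; have le := vle_vadd_lt le_y'x lt_j.
  by exists j => //; apply: leq_sum => k _; exact: (forallP le) k.
move Em: (\sum_k x k - \sum_k y k)%N => m.
elim: m y Em => [|m IH] y Em le_yx; have [->//|/(step_up _ le_yx)[j le_y'x]] := eqVneq x y;
  rewrite sum_vadd_unitv => lt_sum.
  by move/eqP: Em; rewrite subn_eq0 leqNgt lt_sum.
apply: le_trans (IH _ _ le_y'x) (G_step _ _ (X_down _ _ Xx le_yx) _).
  by rewrite sum_vadd_unitv subnS Em.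
exact: X_down Xx le_y'x.
Qed.
End Vectors.

Section ProductForm.
Variables (R : realType) (n : nat) (S : finType) (sz : S -> vec n).
Variables (q : S -> S -> R) (Pi : S -> R).

Definition balance_fun (g : S -> 'I_n -> R) (G : vec n -> R) : Prop :=
  forall s i, img_sz sz (vadd (sz s) (unitv i)) ->
    G (sz s) * g s i = G (vadd (sz s) (unitv i)).

Lemma is_arrival_nle s t : is_arrival sz s t -> ~~ vle (sz t) (sz s).
Proof. by case/existsP => i /eqP ->; exact: vadd_unitv_nle. Qed.

Lemma sum_is_arrival s (F : S -> R) :
  \sum_(t | is_arrival sz s t) F t =
  \sum_(i < n) \sum_(t | sz t == vadd (sz s) (unitv i)) F t.
Proof.
rewrite (exchange_big_dep (is_arrival sz s)) /=; last first.
  by move=> i t _ E; apply/existsP; exists i.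
apply: eq_bigr => t /existsP [i /eqP Ei]; rewrite (big_pred1 i) // => j /=.
by rewrite Ei; apply/eqP/eqP => [/vadd_unitv_inj|->].
Qed.

Lemma qpol_balance g G s t : balance_fun g G ->
  G (sz s) * qpol sz q g s t =
  q s t * (if is_arrival sz s t then G (sz t) else G (sz s)).
Proof.
move=> balG; rewrite /qpol; case: pickP => [i /eqP Ei|no_i].
  have -> : is_arrival sz s t by apply/existsP; exists i; rewrite Ei.
  by rewrite mulrCA balG -?Ei //; exists t.
have -> : is_arrival sz s t = false by apply/negbTE/existsP => -[i]; rewrite no_i.
by rewrite mulr1 mulrC.
Qed.

Hypothesis q_local : forall s t, q s t != 0 ->
  sz t = sz s \/ exists i, sz t = vadd (sz s) (unitv i) \/ sz s = vadd (sz t) (unitv i).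
Hypothesis q_qr : quasi_reversible sz q.
Hypothesis Pi_stationary : stationary_measure q Pi.

Lemma arrival_swap (G : vec n -> R) s t :
  q s t * (if is_arrival sz s t then G (sz t) else G (sz s)) =
  q s t * (if is_arrival sz t s then G (sz s) else G (sz t)).
Proof.
have [->|/q_local[E|[i [E|E]]]] := eqVneq (q s t) 0; first by rewrite !mul0r.
- by rewrite E; case: ifP; case: ifP.
- have -> : is_arrival sz s t by apply/existsP; exists i; rewrite E.
  by rewrite (negbTE (contraL (@is_arrival_nle t s) _)) // E vle_vadd.
- have -> : is_arrival sz t s by apply/existsP; exists i; rewrite E.
  by rewrite (negbTE (contraL (@is_arrival_nle s t) _)) // E vle_vadd.
Qed.

Lemma qr_arrival_sum t (f : vec n -> R) :
  \sum_(u | is_arrival sz t u) Pi t * q t u * f (sz u) =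
  \sum_(u | is_arrival sz t u) Pi u * q u t * f (sz u).
Proof.
rewrite !sum_is_arrival; apply: eq_bigr => i _.
rewrite (eq_bigr (fun u => f (vadd (sz t) (unitv i)) * (Pi t * q t u))) => [|u /eqP->];
  last by rewrite mulrC.
rewrite [RHS](eq_bigr (fun u => f (vadd (sz t) (unitv i)) * (Pi u * q u t))) => [|u /eqP->];
  last by rewrite mulrC.
by rewrite -!mulr_sumr; congr (_ * _); exact: q_qr.
Qed.

(* Arrival flows into and out of [t] both carry the factor [G] of the larger state and
   match by quasi-reversibility; the remaining flows balance because [Pi] does. *)
Lemma stationary_product_form g (G : vec n -> R) :
  (forall s, 0 <= G (sz s)) -> balance_fun g G ->
  stationary (qpol sz q g) (fun s => Pi s * G (sz s)).
Proof.
move=> G_ge0 balG; have [[Pi_ge0 Pi_bal] _] := Pi_stationary.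
split=> [s|t]; first exact: mulr_ge0.
have outflow : Pi t * G (sz t) * \sum_u qpol sz q g t u =
    \sum_(u | is_arrival sz t u) Pi t * q t u * G (sz u) +
    \sum_(u | ~~ is_arrival sz t u) Pi t * q t u * G (sz t).
  rewrite -mulrA mulr_sumr mulr_sumr (bigID (is_arrival sz t)) /=.
  by congr (_ + _); apply: eq_bigr => u au;
    rewrite (qpol_balance _ _ balG) ?(negbTE au) ?au; ring.
have inflow : \sum_s Pi s * G (sz s) * qpol sz q g s t =
    \sum_(s | is_arrival sz t s) Pi s * q s t * G (sz s) +
    \sum_(s | ~~ is_arrival sz t s) Pi s * q s t * G (sz t).
  rewrite (bigID (is_arrival sz t)) /=.
  by congr (_ + _); apply: eq_bigr => s au;
    rewrite -mulrA (qpol_balance _ _ balG) arrival_swap ?(negbTE au) ?au; ring.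
have nonarrival_bal : \sum_(u | ~~ is_arrival sz t u) Pi t * q t u =
    \sum_(s | ~~ is_arrival sz t s) Pi s * q s t.
  have := Pi_bal t; rewrite mulr_sumr (bigID (is_arrival sz t)) /=.
  rewrite [RHS](bigID (is_arrival sz t)) /=.
  have := qr_arrival_sum t (fun _ => 1); rewrite !(eq_bigr _ (fun _ _ => mulr1 _)) => ->.
  exact: addrI.
by rewrite outflow inflow qr_arrival_sum -!mulr_suml nonarrival_bal.
Qed.
End ProductForm.

Section Objective.
Variables (R : realType) (n : nat) (S : finType) (sz : S -> vec n).
Variables (q : S -> S -> R) (Pi : S -> R) (r : S -> R) (Rw : S -> S -> R).

Local Notation objective := (lp_objective sz q Pi r Rw).

Definition lp_mass (G : vec n -> R) : R := \sum_s Pi s * G (sz s).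

Lemma lp_objectiveE G : objective G =
  \sum_s Pi s * G (sz s) * r s +
  \sum_s \sum_t Pi s * q s t * Rw s t *
    (if is_arrival sz s t then G (sz t) else G (sz s)).
Proof.
rewrite /lp_objective -addrA; congr (_ + _); rewrite -big_split; apply: eq_bigr => s _ /=.
rewrite [RHS](bigID (is_arrival sz s)) /= sum_is_arrival; congr (_ + _).
  apply: eq_bigr => i _; apply: eq_bigr => t /eqP Et.
  have -> : is_arrival sz s t by apply/existsP; exists i; rewrite Et.
  by rewrite Et; ring.
by apply: eq_bigr => t /negbTE->; ring.
Qed.

Lemma Greward_product_form g G : balance_fun sz g G ->
  Greward r Rw (qpol sz q g) (fun s => Pi s * G (sz s)) = objective G.
Proof.
move=> balG; rewrite lp_objectiveE /Greward; congr (_ + _).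
apply: eq_bigr => s _; apply: eq_bigr => t _.
by rewrite -(mulrA (Pi s)) (qpol_balance _ _ _ balG); ring.
Qed.

Lemma lp_objective_ext G1 G2 :
  (forall s, G1 (sz s) = G2 (sz s)) -> objective G1 = objective G2.
Proof.
move=> eqG; rewrite !lp_objectiveE; congr (_ + _).
  by apply: eq_bigr => s _; rewrite eqG.
by apply: eq_bigr => s _; apply: eq_bigr => t _; rewrite !eqG.
Qed.

Lemma lp_objective_linear a G1 G2 :
  objective (fun x => a * G1 x + G2 x) = a * objective G1 + objective G2.
Proof.
rewrite !lp_objectiveE mulrDr addrACA; congr (_ + _);
  rewrite mulr_sumr -big_split; apply: eq_bigr => s _ /=; first by ring.
by rewrite mulr_sumr -big_split; apply: eq_bigr => t _ /=; case: ifP => _; ring.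
Qed.

Lemma lp_objective_scale a G :
  objective (fun x => a * G x) = a * objective G.
Proof.
rewrite !lp_objectiveE mulrDr; congr (_ + _);
  rewrite mulr_sumr; apply: eq_bigr => s _ /=; first by ring.
by rewrite mulr_sumr; apply: eq_bigr => t _ /=; case: ifP => _; ring.
Qed.

Lemma lp_mass_scale a G : lp_mass (fun x => a * G x) = a * lp_mass G.
Proof. by rewrite /lp_mass mulr_sumr; apply: eq_bigr => s _; ring. Qed.

Lemma lp_mass_linear a G1 G2 :
  lp_mass (fun x => a * G1 x + G2 x) = a * lp_mass G1 + lp_mass G2.
Proof. by rewrite /lp_mass mulr_sumr -big_split; apply: eq_bigr => s _ /=; ring. Qed.
End Objective.

Definition indic (R : pzRingType) n (A : pred (vec n)) (x : vec n) : R :=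
  if A x then 1 else 0.
Arguments indic {R n} A x.

Section LayerCake.
Variables (R : realType) (n : nat) (S : finType) (sz : S -> vec n).
Hypothesis img_ferrers : ferrers (img_sz sz).

Definition img_antitone (G : vec n -> R) : Prop :=
  forall x i, img_sz sz x -> img_sz sz (vadd x (unitv i)) -> G (vadd x (unitv i)) <= G x.

Definition sz_image (B : {set S}) : pred (vec n) :=
  fun x => [exists s in B, sz s == x].

Definition pos_support (G : vec n -> R) : {set S} := [set s | 0 < G (sz s)].

Lemma sz_image_pos_support G s : sz_image (pos_support G) (sz s) = (0 < G (sz s)).
Proof.
apply/existsP/idP => [[s' /andP[supp_s' /eqP <-]]|Gs]; first by rewrite inE in supp_s'.
by exists s; rewrite inE Gs eqxx.
Qed.

Lemma pos_support_ferrers G s1 :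
  img_antitone G -> 0 < G (sz s1) -> ferrers (sz_image (pos_support G)).
Proof.
move=> G_step Gs1; have G_antitone := ferrers_antitone img_ferrers G_step.
split=> [|x y /existsP[s /andP[supp_s /eqP <-]] le_ys].
  have [s_e s_eE] := img_ferrers.1; rewrite -s_eE sz_image_pos_support.
  by apply: lt_le_trans Gs1 (G_antitone _ _ _ _); [exists s1 | rewrite s_eE vle0x].
have [t Et] := img_ferrers.2 _ _ (ex_intro _ s erefl) le_ys.
rewrite -Et sz_image_pos_support; rewrite inE in supp_s.
by apply: lt_le_trans supp_s (G_antitone _ _ _ _); [exists s | rewrite Et].
Qed.

Variable Phi : (vec n -> R) -> R.
Hypothesis Phi_ext : forall G1 G2, (forall s, G1 (sz s) = G2 (sz s)) -> Phi G1 = Phi G2.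
Hypothesis Phi_linear : forall a G1 G2,
  Phi (fun x => a * G1 x + G2 x) = a * Phi G1 + Phi G2.
Hypothesis Phi_indic_le0 : forall B : {set S},
  ferrers (sz_image B) -> Phi (indic (sz_image B)) <= 0.

Lemma Phi_eq0 G : (forall s, G (sz s) = 0) -> Phi G = 0.
Proof.
move=> G0; rewrite (@Phi_ext _ (fun x => -1 * G x + G x)) ?Phi_linear; first by ring.
by move=> s; rewrite G0; ring.
Qed.

(* Induction on the size of the positive support: subtracting [c] times its indicator,
   [c] the least positive value of [G], keeps [G] feasible and shrinks the support. *)
Lemma layer_cake_le0 G : (forall s, 0 <= G (sz s)) -> img_antitone G -> Phi G <= 0.
Proof.
have [m] := ubnP #|pos_support G|; elim: m G => // m IH G lt_supp G_ge0 G_step.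
case: (pickP (fun s => 0 < G (sz s))) => [s1 Gs1|G_npos]; last first.
  rewrite Phi_eq0 // => s; apply/eqP; rewrite eq_le G_ge0 andbT leNgt; exact/negbT.
have [s0 c_gt0 G_min] := arg_minP (P := fun s => 0 < G (sz s)) (fun s => G (sz s)) Gs1.
pose c := G (sz s0); pose B := sz_image (pos_support G).
pose G' x := G x - c * indic B x.
have G'_ge0 s : 0 <= G' (sz s).
  rewrite /G' /indic /B sz_image_pos_support; case: ifP => Gs; last by rewrite mulr0 subr0.
  by rewrite mulr1 subr_ge0 G_min.
have G'_step : img_antitone G'.
  move=> x i [s <-] [t Et]; rewrite -Et.
  have Gts : G (sz t) <= G (sz s) by rewrite Et; apply: G_step; [exists s | exists t].
  have [Gt|Gt] := boolP (0 < G (sz t)).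
    by rewrite /G' /indic /B !sz_image_pos_support Gt (lt_le_trans Gt Gts) lerD2r.
  apply: le_trans (G'_ge0 s); rewrite /G' /indic /B sz_image_pos_support (negbTE Gt).
  by rewrite mulr0 subr0 leNgt.
have lt_supp' : (#|pos_support G'| < m)%N.
  rewrite -ltnS; apply: leq_trans lt_supp; apply: proper_card; apply/properP; split.
    apply/subsetP => s; rewrite !inE => G's; apply: lt_le_trans G's _.
    by rewrite /G' gerBl /indic; case: ifP; rewrite ?mulr1 ?mulr0 // ltW.
  by exists s0; rewrite !inE // /G' /indic /B sz_image_pos_support c_gt0 mulr1 subrr ltxx.
rewrite (@Phi_ext _ (fun x => c * indic B x + G' x)) => [|s]; last by rewrite /G'; ring.
rewrite Phi_linear -[0]addr0; apply: lerD; last exact: IH.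
exact: mulr_ge0_le0 (ltW c_gt0) (Phi_indic_le0 (pos_support_ferrers G_step Gs1)).
Qed.
End LayerCake.

Section LpOptimum.
Variables (R : realType) (n : nat) (S : finType) (sz : S -> vec n).
Variables (q : S -> S -> R) (Pi : S -> R) (r : S -> R) (Rw : S -> S -> R) (emp : S).
Hypothesis img_ferrers : ferrers (img_sz sz).
Hypothesis sz_emp : sz emp = vzero n.
Hypothesis Pi_ge0 : forall s, 0 <= Pi s.
Hypothesis Pi_emp : 0 < Pi emp.

Local Notation objective := (lp_objective sz q Pi r Rw).
Local Notation mass := (lp_mass sz Pi).

Lemma lp_mass_indic (A : pred (vec n)) : mass (indic A) = \sum_(s | A (sz s)) Pi s.
Proof.
by rewrite /lp_mass [RHS]big_mkcond; apply: eq_bigr => s _; rewrite /indic; case: ifP;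
  rewrite ?mulr1 ?mulr0.
Qed.

Lemma lp_mass_indic_gt0 (A : pred (vec n)) : A (vzero n) -> 0 < mass (indic A).
Proof.
move=> A0; rewrite lp_mass_indic (bigD1 emp) /=; last by rewrite sz_emp.
by apply: lt_le_trans Pi_emp _; rewrite lerDl sumr_ge0.
Qed.

Lemma lp_optimal_indicator : exists A : pred (vec n),
  [/\ ferrers (fun x => A x), forall x, A x -> img_sz sz x &
      lp_optimal sz q Pi r Rw (GammaA sz Pi A)].
Proof.
(* Candidate Ferrers sets are images [sz_image sz B] of sets of states: finitely many. *)
pose ratio B := objective (indic (sz_image sz B)) / mass (indic (sz_image sz B)).
have emp_ferrers : `[< ferrers (sz_image sz [set emp]) >].
  apply/asboolP; split=> [|x y /existsP[s /andP[]]];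
    first by apply/existsP; exists emp; rewrite in_set1 eqxx sz_emp eqxx.
  rewrite in_set1 => /eqP-> /eqP<-; rewrite sz_emp => /vle0->.
  by apply/existsP; exists emp; rewrite in_set1 eqxx sz_emp eqxx.
have [Bmax /asboolP A_ferrers ratio_max] :=
  arg_maxP (P := fun B => `[< ferrers (sz_image sz B) >]) ratio emp_ferrers.
pose A := sz_image sz Bmax; pose rho := ratio Bmax; pose Z := mass (indic A).
have Z_gt0 : 0 < Z := lp_mass_indic_gt0 A_ferrers.1.
have ratio_bound G : (forall s, 0 <= G (sz s)) -> img_antitone sz G ->
    objective G <= rho * mass G.
  move=> G_ge0 G_step; rewrite -subr_le0.
  apply: (layer_cake_le0 img_ferrers (Phi := fun G => objective G - rho * mass G)) => //.
  - move=> G1 G2 eqG; rewrite (lp_objective_ext _ _ _ _ eqG); congr (_ - rho * _).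
    by apply: eq_bigr => s _; rewrite eqG.
  - by move=> a G1 G2; rewrite lp_objective_linear lp_mass_linear; ring.
  move=> B B_ferrers; rewrite subr_le0 -ler_pdivrMr ?lp_mass_indic_gt0 ?B_ferrers.1 //.
  exact/ratio_max/asboolP.
have GammaAE x : GammaA sz Pi A x = Z^-1 * indic A x.
  by rewrite /GammaA -lp_mass_indic mulrC.
have GammaA_obj : objective (GammaA sz Pi A) = rho.
  rewrite (lp_objective_ext q Pi r Rw (G2 := fun x => Z^-1 * indic A x)) //.
  by rewrite lp_objective_scale mulrC.
have GammaA_feasible : lp_feasible sz Pi (GammaA sz Pi A).
  split=> [x _|]; last split=> [x i _ _|].
  - rewrite GammaAE; apply: mulr_ge0; first by rewrite invr_ge0 ltW.
    by rewrite /indic; case: ifP.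
  - rewrite !GammaAE ler_pM2l ?invr_gt0 // /indic; case: ifP => [Axi|_]; last by case: ifP.
    by have := A_ferrers.2 _ _ Axi (vle_vadd x i); rewrite /A => ->.
  - have -> : \sum_s Pi s * GammaA sz Pi A (sz s) = Z^-1 * Z.
      by rewrite -lp_mass_scale; apply: eq_bigr => s _; rewrite GammaAE.
    exact: mulVf (lt0r_neq0 Z_gt0).
exists A; split=> // [x /existsP[s /andP[_ /eqP<-]]|]; first by exists s.
split=> // G [G_ge0 [G_step G_mass]]; rewrite GammaA_obj.
have := ratio_bound G (fun s => G_ge0 _ (ex_intro _ s erefl)) G_step.
by rewrite /lp_mass G_mass mulr1.
Qed.
End LpOptimum.

Section Policies.
Variables (R : realType) (n : nat) (S : finType) (sz : S -> vec n).
Variables (q : S -> S -> R) (Pi : S -> R) (r : S -> R) (Rw : S -> S -> R) (emp : S).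
Hypothesis q_ge0 : forall s t, 0 <= q s t.
Hypothesis q_local : forall s t, q s t != 0 ->
  sz t = sz s \/ exists i, sz t = vadd (sz s) (unitv i) \/ sz s = vadd (sz t) (unitv i).
Hypothesis q_qr : quasi_reversible sz q.
Hypothesis Pi_stationary : stationary_measure q Pi.
Hypothesis sz_emp : sz emp = vzero n.
Hypothesis down_to_emp : forall s, reach (step_down sz q) s emp.

Lemma qpol_ge0 g : admission_policy g -> forall s t, 0 <= qpol sz q g s t.
Proof.
move=> g01 s t; rewrite /qpol mulr_ge0 //; case: pickP => // i _.
by case/andP: (g01 s i).
Qed.

Lemma qpol_connect_emp g s : connect (step_pos (qpol sz q g)) s emp.
Proof.
apply: connect_sub ((reach_connect _ _ _).1 (down_to_emp s)) => a b /andP[qab le_ba].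
apply: connect1; rewrite /step_pos /qpol; case: pickP => [i /eqP Ebi|_]; last by rewrite mulr1.
by move: le_ba; rewrite Ebi (negbTE (vadd_unitv_nle _ _)).
Qed.

Lemma stationary_measure_emp_gt0 : 0 < Pi emp.
Proof.
have [[Pi_ge0 _] [s Pis]] := Pi_stationary.
apply: (stationary_connect_gt0 q_ge0 Pi_stationary.1 (s := s)).
  by rewrite lt0r Pis Pi_ge0.
apply: connect_sub ((reach_connect _ _ _).1 (down_to_emp s)) => a b /andP[qab _].
exact: connect1.
Qed.

Lemma product_form_distribution g G :
  (forall s, 0 <= G (sz s)) -> balance_fun sz g G -> lp_mass sz Pi G = 1 ->
  stationary_distribution (qpol sz q g) (fun s => Pi s * G (sz s)).
Proof. by move=> G_ge0 balG massG; split; first exact: stationary_product_form. Qed.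

Lemma balanced_policy_reward g Pg :
  admission_policy g -> balanced sz g -> stationary_distribution (qpol sz q g) Pg ->
  exists2 G, lp_feasible sz Pi G &
    Greward r Rw (qpol sz q g) Pg = lp_objective sz q Pi r Rw G.
Proof.
move=> g01 [_ [Gam [Gam0 [Gam_ge0 balGam]]]] Pg_dist.
pose Z := lp_mass sz Pi Gam; pose G x := Z^-1 * Gam x.
have Z_gt0 : 0 < Z.
  rewrite /Z /lp_mass (bigD1 emp) //= sz_emp Gam0 mulr1.
  apply: lt_le_trans stationary_measure_emp_gt0 _; rewrite lerDl; apply: sumr_ge0 => s _.
  by apply: mulr_ge0; [exact: Pi_stationary.1.1 | apply: Gam_ge0; exists s].
have G_ge0 s : 0 <= G (sz s).
  by apply: mulr_ge0; [rewrite invr_ge0 ltW | apply: Gam_ge0; exists s].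
have balG : balance_fun sz g G by move=> s i img_si; rewrite /G -mulrA balGam.
have massG : lp_mass sz Pi G = 1 by rewrite lp_mass_scale mulVf ?lt0r_neq0.
exists G.
  split=> [x [s <-] //|]; split=> // x i [s Es] img_xi.
  rewrite -Es in img_xi *; rewrite -balG // ler_piMr //; last by case/andP: (g01 s i).
have Pg_eq := stationary_distribution_unique (qpol_ge0 g01) (qpol_connect_emp g)
  (product_form_distribution G_ge0 balG massG) Pg_dist.
rewrite -(Greward_product_form _ _ _ _ balG) /Greward; congr (_ + _).
  by apply: eq_bigr => s _; rewrite Pg_eq.
by apply: eq_bigr => s _; apply: eq_bigr => t _; rewrite Pg_eq.
Qed.

Lemma det_policy_balance (A : pred (vec n)) :
  ferrers (fun x => A x) -> balance_fun sz (det_policy R sz A) (GammaA sz Pi A).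
Proof.
move=> [_ A_down] s i _; rewrite /det_policy /GammaA.
case Asi: (A (vadd (sz s) (unitv i))); last by rewrite !mulr0 mul0r.
by rewrite (A_down _ _ Asi (vle_vadd _ _)) mulr1.
Qed.
End Policies.

Theorem mainTheorem7 (R : realType) (n : nat) (S : finType)
  (sz : S -> vec n) (emp : S) (q : S -> S -> R) (Pi : S -> R)
  (r : S -> R) (Rw : S -> S -> R) :
  queueing_system sz emp q ->
  assumption1 sz emp q ->
  quasi_reversible sz q ->
  stationary_measure q Pi ->
  exists A : pred (vec n),
    ferrers (fun x => A x) /\ (forall x, A x -> img_sz sz x) /\
    (exists PA : S -> R,
       stationary_distribution (qpol sz q (det_policy R sz A)) PA /\
       forall g : S -> 'I_n -> R,
         admission_policy g -> balanced sz g ->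
         forall Pg : S -> R, stationary_distribution (qpol sz q g) Pg ->
           Greward r Rw (qpol sz q g) Pg
           <= Greward r Rw (qpol sz q (det_policy R sz A)) PA) /\
    lp_optimal sz q Pi r Rw (GammaA sz Pi A).
Proof.
move=> [img_ferrers [sz_emp [_ [q_ge0 q_local]]]] [_ [_ [_ [down _]]]] q_qr Pi_st.
have Pi_emp := stationary_measure_emp_gt0 q_ge0 Pi_st down.
have [A [A_ferrers A_img GA_opt]] :=
  lp_optimal_indicator q r Rw img_ferrers sz_emp Pi_st.1.1 Pi_emp.
have [[GA_ge0 [_ GA_mass]] GA_max] := GA_opt.
have GA_bal := det_policy_balance (sz := sz) Pi A_ferrers.
exists A; split=> //; split=> //; split=> //.
exists (fun s => Pi s * GammaA sz Pi A (sz s)); split.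
  have GA_ge0' s : 0 <= GammaA sz Pi A (sz s) by apply: GA_ge0; exists s.
  exact: (product_form_distribution q_local q_qr Pi_st GA_ge0' GA_bal GA_mass).
move=> g g01 g_bal Pg Pg_dist.
have [G G_feas ->] :=
  balanced_policy_reward r Rw q_ge0 q_local q_qr Pi_st sz_emp down g01 g_bal Pg_dist.
by rewrite Greward_product_form // GA_max.
Qed.
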